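(* For all $\alpha\in\dot\Delta$ and all $\beta'\in\dot\Delta'$, the product $r_\alpha r_{\beta'}$ has infinite order.
   Context: Let $\tau=(1+\sqrt5)/2$, $\tau'=(1-\sqrt5)/2$. Let $\Delta\subset\mathbb{R}^4$ be the set of 120 vectors consisting of: the 8 vectors obtained from $(\pm1,0,0,0)$ by permuting coordinates; the 16 vectors $\frac12(\pm1,\pm1,\pm1,\pm1)$; and the 96 vectors obtained from $\frac12(0,\pm1,\pm\tau',\pm\tau)$ (all sign choices) by even permutations of the coordinates. Let $\Delta'$ be the image of $\Delta$ under the Galois conjugation $\tau\leftrightarrow\tau'$ applied to each coordinate. Put $K=\Delta\cap\Delta'$, $\dot\Delta=\Delta\setminus K$, $\dot\Delta'=\Delta'\setminus K$. For a unit vector $a$, $r_a(x)=x-2(x\cdot a)a$ is the orthogonal reflection in $a$. *)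

From HB Require Import structures.
From mathcomp Require Import all_boot all_order all_algebra all_fingroup.
Set Implicit Arguments. Unset Strict Implicit. Unset Printing Implicit Defensive.
Import Order.TTheory GRing.Theory Num.Theory.
Local Open Scope ring_scope.

Section H4.
Variable R : rcfType.

Definition tau : R := (1 + Num.sqrt 5) / 2.
Definition tau' : R := (1 - Num.sqrt 5) / 2.

Definition vec4 (a b c d : R) : 'rV[R]_4 := \row_(i < 4) [:: a; b; c; d]`_i.

Definition permv (s : 'S_4) (v : 'rV[R]_4) : 'rV[R]_4 := \row_(i < 4) v 0 (s i).

Definition sgn (e : bool) : R := (-1) ^+ e.

Definition DeltaA (v : 'rV[R]_4) : Prop :=
  exists (s : 'S_4) (e : bool), v = permv s (vec4 (sgn e) 0 0 0).

Definition DeltaB (v : 'rV[R]_4) : Prop :=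
  exists e1 e2 e3 e4 : bool,
    v = vec4 (sgn e1 / 2) (sgn e2 / 2) (sgn e3 / 2) (sgn e4 / 2).

Definition DeltaC (a b : R) (v : 'rV[R]_4) : Prop :=
  exists (s : 'S_4) (e1 e2 e3 : bool), ~~ odd_perm s /\
    v = permv s (vec4 0 (sgn e1 / 2) (sgn e2 * a / 2) (sgn e3 * b / 2)).

Definition Delta (v : 'rV[R]_4) : Prop :=
  DeltaA v \/ DeltaB v \/ DeltaC tau' tau v.

(* Galois conjugate tau <-> tau' applied coordinatewise: it fixes the
   rational vectors and swaps tau, tau' in the third family *)
Definition Delta' (v : 'rV[R]_4) : Prop :=
  DeltaA v \/ DeltaB v \/ DeltaC tau tau' v.

Definition K (v : 'rV[R]_4) : Prop := Delta v /\ Delta' v.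
Definition Deltadot (v : 'rV[R]_4) : Prop := Delta v /\ ~ K v.
Definition Deltadot' (v : 'rV[R]_4) : Prop := Delta' v /\ ~ K v.

Definition dot (x y : 'rV[R]_4) : R := (x *m y^T) 0 0.
Definition refl (a x : 'rV[R]_4) : 'rV[R]_4 := x - (2 * dot x a) *: a.

Definition infinite_order (f : 'rV[R]_4 -> 'rV[R]_4) : Prop :=
  forall n : nat, (0 < n)%N -> exists x, iter n f x <> x.

End H4.

(* Let [c = alpha . beta'].  The product [f = r_alpha r_beta'] fixes the orthogonal
   complement of [alpha] and [beta'] and acts on their span as a rotation whose trace is
   [t = 4 c ^ 2 - 2], so [d n = f^n alpha . alpha] satisfies [d (n + 2) = t d (n + 1) - d n].
   Here [4 c] lies in the golden integers [Z[tau]], and because [alpha] and [beta'] come from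
   the two Galois-conjugate copies of the root system, [4 c] is odd, i.e. nonzero in
   [Z[tau] / 2 = F_4]; this is a finite check over the even permutations of four letters.  Then
   [2 ^ (2 n + 1) d n] is an odd golden integer for [n > 0], so it is never the power of two
   [2 ^ (2 n + 1)], and [f ^ n alpha <> alpha]. *)

From HB Require Import structures.
From mathcomp Require Import all_boot all_order all_algebra all_fingroup.
From mathcomp Require Import ring zify.
Import Order.TTheory GRing.Theory Num.Theory.
Local Open Scope ring_scope.
Set Implicit Arguments. Unset Strict Implicit.

Lemma F2_cases (x : 'F_2) : x = 0 \/ x = 1.
Proof. by case: x => [[|[|m]] // hm]; [left|right]; apply: val_inj. Qed.

Definition oddz (z : int) : bool := (z%:~R : 'F_2) != 0.

Lemma oddzD (a b : int) : oddz (a + b) = oddz a (+) oddz b.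
Proof. by rewrite /oddz intrD; case: (F2_cases a%:~R) => ->; case: (F2_cases b%:~R) => ->. Qed.

Lemma oddzN (a : int) : oddz (- a) = oddz a.
Proof. by rewrite /oddz intrN; case: (F2_cases a%:~R) => ->. Qed.

Lemma oddzB (a b : int) : oddz (a - b) = oddz a (+) oddz b.
Proof. by rewrite oddzD oddzN. Qed.

Lemma oddzM (a b : int) : oddz (a * b) = oddz a && oddz b.
Proof. by rewrite /oddz intrM; case: (F2_cases a%:~R) => ->; case: (F2_cases b%:~R) => ->. Qed.

Lemma oddz_mul2 (a : int) : oddz (2 * a) = false.
Proof. by rewrite oddzM. Qed.

(* [(a, b) : f4] stands for [a + b w] in the field with four elements, [w ^ 2 = w + 1]. *)
Definition f4 := (bool * bool)%type.

Definition add4 (x y : f4) : f4 := (x.1 (+) y.1, x.2 (+) y.2).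
Definition mul4 (x y : f4) : f4 :=
  ((x.1 && y.1) (+) (x.2 && y.2), (x.1 && y.2) (+) (x.2 && y.1) (+) (x.2 && y.2)).

Lemma mul4_neq0 (x y : f4) :
  x != (false, false) -> y != (false, false) -> mul4 x y != (false, false).
Proof. by case: x => [[] []]; case: y => [[] []]. Qed.

(* [(a, b) : zt] codes the golden integer [a + b tau]. *)
Definition zt := (int * int)%type.

Definition zt_add (x y : zt) : zt := (x.1 + y.1, x.2 + y.2).
Definition zt_sub (x y : zt) : zt := (x.1 - y.1, x.2 - y.2).
Definition zt_mul (x y : zt) : zt :=
  (x.1 * y.1 + x.2 * y.2, x.1 * y.2 + x.2 * y.1 + x.2 * y.2).
Definition zt_sign (e : bool) (x : zt) : zt := if e then (- x.1, - x.2) else x.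

Definition tau_code : zt := (0, 1).
Definition tau'_code : zt := (1, -1).

Definition zt_mod2 (x : zt) : f4 := (oddz x.1, oddz x.2).
Definition zt_odd (x : zt) : bool := zt_mod2 x != (false, false).

Lemma zt_mod2D (x y : zt) : zt_mod2 (zt_add x y) = add4 (zt_mod2 x) (zt_mod2 y).
Proof. by rewrite /zt_mod2 /= !oddzD. Qed.

Lemma zt_mod2M (x y : zt) : zt_mod2 (zt_mul x y) = mul4 (zt_mod2 x) (zt_mod2 y).
Proof. by rewrite /zt_mod2 /= !oddzD !oddzM. Qed.

Lemma zt_mod2_sign (e : bool) (x : zt) : zt_mod2 (zt_sign e x) = zt_mod2 x.
Proof. by case: e; rewrite /zt_mod2 /= ?oddzN. Qed.

Lemma zt_odd_mul (x y : zt) : zt_odd x -> zt_odd y -> zt_odd (zt_mul x y).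
Proof. by rewrite /zt_odd zt_mod2M; apply: mul4_neq0. Qed.

Lemma zt_odd_sub_even (x y : zt) :
  zt_mod2 y = (false, false) -> zt_odd (zt_sub x y) = zt_odd x.
Proof. by rewrite /zt_odd /zt_mod2 /= !oddzB => -[-> ->]; rewrite !addbF. Qed.

Section GoldenIntegers.
Variable R : rcfType.

Lemma tau_sqr : tau R ^+ 2 = tau R + 1.
Proof.
have sqrt5_sqr : Num.sqrt (5 : R) ^+ 2 = 5 by rewrite sqr_sqrtr // ler0n.
rewrite /tau; set s := Num.sqrt 5.
have -> : ((1 + s) / 2) ^+ 2 = (1 + 2 * s + s ^+ 2) / 4 by field.
by rewrite sqrt5_sqr; field.
Qed.

Lemma tau'E : tau' R = 1 - tau R.
Proof. by rewrite /tau /tau'; field. Qed.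

Definition zt_eval (x : zt) : R := x.1%:~R + x.2%:~R * tau R.

Lemma zt_evalD (x y : zt) : zt_eval (zt_add x y) = zt_eval x + zt_eval y.
Proof. by rewrite /zt_eval /= !intrD; ring. Qed.

Lemma zt_evalB (x y : zt) : zt_eval (zt_sub x y) = zt_eval x - zt_eval y.
Proof. by rewrite /zt_eval /= !intrB; ring. Qed.

Lemma zt_evalM (x y : zt) : zt_eval (zt_mul x y) = zt_eval x * zt_eval y.
Proof.
rewrite /zt_eval /= !intrD !intrM.
have -> : (x.1%:~R + x.2%:~R * tau R) * (y.1%:~R + y.2%:~R * tau R) =
  x.1%:~R * y.1%:~R + (x.1%:~R * y.2%:~R + x.2%:~R * y.1%:~R) * tau R
  + x.2%:~R * y.2%:~R * tau R ^+ 2 :> R by ring.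
by rewrite tau_sqr; ring.
Qed.

Lemma zt_eval_sign (e : bool) (x : zt) : zt_eval (zt_sign e x) = sgn R e * zt_eval x.
Proof. by case: e; rewrite /sgn /zt_eval /= ?intrN; ring. Qed.

Lemma zt_eval_int (a : int) : zt_eval (a, 0) = a%:~R.
Proof. by rewrite /zt_eval /=; ring. Qed.

Lemma zt_eval_tau : zt_eval tau_code = tau R.
Proof. by rewrite /zt_eval /=; ring. Qed.

Lemma zt_eval_tau' : zt_eval tau'_code = tau' R.
Proof. by rewrite tau'E /zt_eval /=; ring. Qed.

(* From [a + b tau = 2 ^ e], the integer [m = 2 ^ e - a = b tau] satisfies
   [m ^ 2 - b m - b ^ 2 = 0], which forces [b], then [m], then [a] to be even. *)
Lemma zt_eval_neq_pow2 (z : zt) (e : nat) : zt_odd z -> (0 < e)%N -> zt_eval z != 2 ^+ e.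
Proof.
case: z => a b; case: e => // e z_odd _; apply/eqP => /= z_eq.
set m : int := 2 ^+ e.+1 - a.
have m_eq : (m%:~R : R) = b%:~R * tau R by rewrite /m intrB rmorphXn /= -z_eq /zt_eval; ring.
have norm_eq0 : m * m - b * m - b * b = 0.
  apply/eqP; rewrite -(intr_eq0 R) !intrB !intrM m_eq.
  have -> : b%:~R * tau R * (b%:~R * tau R) - b%:~R * (b%:~R * tau R) - b%:~R * b%:~R
     = (b%:~R * b%:~R) * (tau R ^+ 2 - tau R - 1) :> R by ring.
  by rewrite tau_sqr; apply/eqP; ring.
have : oddz (m * m - b * m - b * b) = false by rewrite norm_eq0.
move: z_odd; rewrite /zt_odd /zt_mod2 /= !oddzB !oddzM /m oddzB exprS oddz_mul2 /=.
by case: (oddz a); case: (oddz b).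
Qed.

Fixpoint lucas (U : zt) (n : nat) : zt :=
  match n with
  | 0 => (2, 0)
  | 1 => U
  | (m.+1 as n').+1 => zt_sub (zt_mul U (lucas U n')) (zt_mul (16, 0) (lucas U m))
  end.

Lemma lucas_odd (U : zt) (n : nat) : zt_odd U -> zt_odd (lucas U n.+1).
Proof.
move=> U_odd; elim: n => [|n IH] //=.
by rewrite zt_odd_sub_even ?zt_mod2M //; apply: zt_odd_mul.
Qed.

Section Recurrence.
Variables (U : zt) (t : R) (d : nat -> R).
Hypotheses (Ut : 4 * t = zt_eval U) (d0 : d 0%N = 1) (d1 : d 1%N = t / 2).
Hypothesis d_rec : forall n, d n.+2 = t * d n.+1 - d n.

Lemma lucas_eval (n : nat) : zt_eval (lucas U n) = 2 ^+ (2 * n + 1) * d n.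
Proof.
suff: zt_eval (lucas U n) = 2 ^+ (2 * n + 1) * d n /\
      zt_eval (lucas U n.+1) = 2 ^+ (2 * n + 3) * d n.+1 by case.
elim: n => [|n [IH IH1]].
  by rewrite /= d0 d1 -Ut /zt_eval /=; split; field.
have -> : (2 * n.+1 + 1 = 2 * n + 3)%N by lia.
split=> //.
rewrite [lucas U _]/= zt_evalB !zt_evalM IH IH1 zt_eval_int d_rec -Ut.
have -> : (2 * n.+1 + 3 = 4 + (2 * n + 1))%N by lia.
have -> : (2 * n + 3 = 2 + (2 * n + 1))%N by lia.
by rewrite !exprD; ring.
Qed.

Lemma recurrence_neq1 (n : nat) : zt_odd U -> (0 < n)%N -> d n != 1.
Proof.
case: n => // n U_odd _; apply/eqP => dn1.
have := zt_eval_neq_pow2 (lucas_odd n U_odd) (isT : (0 < 2 * n.+1 + 1)%N).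
by rewrite lucas_eval dn1 mulr1 eqxx.
Qed.

End Recurrence.
End GoldenIntegers.

Section Reflections.
Variable R : rcfType.
Implicit Types (a b x y : 'rV[R]_4) (k : R).

Lemma dotE x y : dot x y = \sum_i x 0 i * y 0 i.
Proof. by rewrite /dot mxE; apply: eq_bigr => i _; rewrite mxE. Qed.

Lemma dotC x y : dot x y = dot y x.
Proof. by rewrite !dotE; apply: eq_bigr => i _; rewrite mulrC. Qed.

Lemma dotBl x y a : dot (x - y) a = dot x a - dot y a.
Proof. by rewrite !dotE -sumrB; apply: eq_bigr => i _; rewrite !mxE mulrBl. Qed.

Lemma dotZl k x a : dot (k *: x) a = k * dot x a.
Proof. by rewrite !dotE mulr_sumr; apply: eq_bigr => i _; rewrite !mxE mulrA. Qed.

Lemma reflB a x y : refl a (x - y) = refl a x - refl a y.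
Proof. by rewrite /refl dotBl; apply/rowP => j; rewrite !mxE; ring. Qed.

Lemma reflZ a k x : refl a (k *: x) = k *: refl a x.
Proof. by rewrite /refl dotZl; apply/rowP => j; rewrite !mxE; ring. Qed.

Section Rotation.
Variables a b : 'rV[R]_4.
Hypotheses (a_unit : dot a a = 1) (b_unit : dot b b = 1).
Let c := dot a b.
Let f x := refl a (refl b x).

(* [f] is a rotation of the plane spanned by [a] and [b], with trace [4 c ^ 2 - 2]
   there, so it satisfies its characteristic equation on that plane. *)
Lemma iter_rotation_rec (n : nat) :
  iter n.+2 f a = (4 * c ^+ 2 - 2) *: iter n.+1 f a - iter n f a.
Proof.
have fB x y : f (x - y) = f x - f y by rewrite /f !reflB.
have fZ k x : f (k *: x) = k *: f x by rewrite /f !reflZ.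
have fa : f a = (4 * c ^+ 2 - 1) *: a - (2 * c) *: b.
  rewrite /f /refl dotBl dotZl [dot b a]dotC -/c a_unit.
  by apply/rowP => j; rewrite !mxE; ring.
have fb : f b = (2 * c) *: a - b.
  rewrite /f /refl dotBl dotZl b_unit [dot b a]dotC -/c.
  by apply/rowP => j; rewrite !mxE; ring.
elim: n => [|n IH]; last by rewrite iterS {1}IH fB fZ.
by rewrite /= fa fB !fZ fa fb; apply/rowP => j; rewrite !mxE; ring.
Qed.

Lemma dot_iter_rotation_rec (n : nat) :
  dot (iter n.+2 f a) a = (4 * c ^+ 2 - 2) * dot (iter n.+1 f a) a - dot (iter n f a) a.
Proof. by rewrite iter_rotation_rec dotBl dotZl. Qed.

Lemma dot_rotation : dot (f a) a = (4 * c ^+ 2 - 2) / 2.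
Proof.
rewrite /f /refl !dotBl !dotZl a_unit [dot b a]dotC -/c.
by field.
Qed.

End Rotation.
End Reflections.

Lemma sum4 (V : nmodType) (F : 'I_4 -> V) :
  \sum_i F i = F (inord 0) + F (inord 1) + F (inord 2) + F (inord 3).
Proof.
rewrite (eq_bigr (fun i : 'I_4 => F (inord i))) => [|i _]; last by rewrite inord_val.
by rewrite -(big_mkord xpredT (fun k => F (inord k))) unlock /= addr0 !addrA.
Qed.

Section Coordinates.
Variable R : rcfType.
Implicit Types (s t : 'S_4) (x y : 'rV[R]_4).

Lemma vec4E (a0 a1 a2 a3 : R) (k : nat) :
  (k < 4)%N -> vec4 a0 a1 a2 a3 0 (inord k) = [:: a0; a1; a2; a3]`_k.
Proof. by move=> k_lt4; rewrite mxE inordK. Qed.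

Lemma dot_vec4 (a0 a1 a2 a3 b0 b1 b2 b3 : R) :
  dot (vec4 a0 a1 a2 a3) (vec4 b0 b1 b2 b3) = a0 * b0 + a1 * b1 + a2 * b2 + a3 * b3.
Proof. by rewrite dotE sum4 !vec4E. Qed.

Lemma permvM s t x : permv s (permv t x) = permv (s * t)%g x.
Proof. by apply/rowP => i; rewrite !mxE permM. Qed.

Lemma dot_permv s x y : dot (permv s x) (permv s y) = dot x y.
Proof.
rewrite !dotE [RHS](reindex_inj (@perm_inj _ s)).
by apply: eq_bigr => i _; rewrite !mxE.
Qed.

Lemma dot_permv2 s t x y : dot (permv s x) (permv t y) = dot x (permv (s^-1 * t)%g y).
Proof. by rewrite -(dot_permv s x) permvM mulKVg. Qed.

End Coordinates.

Definition inversions (q : seq nat) : nat :=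
  count (fun ij => (ij.1 < ij.2) && (nth 0 q ij.2 < nth 0 q ij.1))%N
    [seq (i, j) | i <- iota 0 (size q), j <- iota 0 (size q)].

Definition swap_code (x y : nat) (q : seq nat) : seq nat :=
  [seq nth 0 q (if k == x then y else if k == y then x else k) | k <- iota 0 (size q)].

Lemma swap_code_inversions :
  all (fun q => all (fun x => all (fun y =>
    (x != y) ==> (odd (inversions (swap_code x y q)) == ~~ odd (inversions q)))
  (iota 0 4)) (iota 0 4)) (permutations (iota 0 4)).
Proof. by vm_compute. Qed.

Definition perm_code (p : 'S_4) : seq nat := [seq val (p (inord k)) | k <- iota 0 4].

Lemma nth_perm_code (p : 'S_4) (k : nat) : (k < 4)%N -> nth 0 (perm_code p) k = p (inord k).
Proof. by move=> k_lt4; rewrite (nth_map 0) ?size_iota // nth_iota. Qed.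

Lemma perm_code_permutation (p : 'S_4) : perm_code p \in permutations (iota 0 4).
Proof.
have code_uniq : uniq (perm_code p).
  rewrite map_inj_in_uniq ?iota_uniq // => i j; rewrite !mem_iota /= => i_lt4 j_lt4.
  by move/val_inj/perm_inj/(congr1 val); rewrite /= !inordK.
have code_sub : {subset perm_code p <= iota 0 4}.
  by move=> _ /mapP[k _ ->]; rewrite mem_iota ltn_ord.
have [_ code_eq] := uniq_min_size code_uniq code_sub (leqnn 4).
by rewrite mem_permutations uniq_perm ?iota_uniq.
Qed.

Lemma perm_code_tperm (x y : 'I_4) (p : 'S_4) :
  perm_code (tperm x y * p)%g = swap_code x y (perm_code p).
Proof.
rewrite /swap_code size_map size_iota; apply/eq_in_map => k.
rewrite mem_iota add0n => /= k_lt4.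
set k' := if k == val x then val y else if k == val y then val x else k.
have k'_lt4 : (k' < 4)%N by rewrite /k'; case: ifP => _; [|case: ifP]; rewrite ?ltn_ord.
have inord_eq (z : 'I_4) : (inord k == z) = (k == val z).
  by rewrite -(inj_eq val_inj) /= inordK.
rewrite permM nth_perm_code //; congr (val (p _)).
by rewrite permE /= !inord_eq /k'; case: ifP => _; [|case: ifP => _]; rewrite ?inord_val.
Qed.

Lemma odd_perm_inversions (p : 'S_4) : odd_perm p = odd (inversions (perm_code p)).
Proof.
have [ts -> ts_proper] := prod_tpermP p.
elim: ts ts_proper => [_|[x y] ts IH /= /andP[/= xy_neq ts_proper]].
  suff -> : perm_code (\prod_(t <- [::]) tperm t.1 t.2)%g = iota 0 4.
    by rewrite big_nil odd_perm1.
  rewrite big_nil -[RHS]map_id; apply/eq_in_map => k.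
  by rewrite mem_iota => /= k_lt4; rewrite perm1 inordK.
rewrite big_cons odd_mul_tperm xy_neq IH // perm_code_tperm.
have x_in : val x \in iota 0 4 by rewrite mem_iota ltn_ord.
have y_in : val y \in iota 0 4 by rewrite mem_iota ltn_ord.
have /allP/(_ _ x_in)/allP/(_ _ y_in) := allP swap_code_inversions _ (perm_code_permutation
  (\prod_(t <- ts) tperm t.1 t.2)%g).
by rewrite xy_neq => /eqP ->.
Qed.

(* Twice the coordinates of [1/2 (0, +-1, +-x, +-y)]. *)
Definition root_code (x y : zt) (e1 e2 e3 : bool) : seq zt :=
  [:: (0, 0); zt_sign e1 (1, 0); zt_sign e2 x; zt_sign e3 y].

Definition zt_pdot (A B : seq zt) (q : seq nat) : zt :=
  foldr zt_add (0, 0)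
    [seq zt_mul (nth (0, 0) A k) (nth (0, 0) B (nth 0 q k)) | k <- iota 0 4].

Definition f4_pdot (u w : seq f4) (q : seq nat) : f4 :=
  foldr add4 (false, false)
    [seq mul4 (nth (false, false) u k) (nth (false, false) w (nth 0 q k)) | k <- iota 0 4].

Definition root_mod2 (x y : zt) : seq f4 :=
  [:: (false, false); (true, false); zt_mod2 x; zt_mod2 y].

Lemma zt_mod2_pdot (x y x' y' : zt) (e1 e2 e3 f1 f2 f3 : bool) (q : seq nat) :
  zt_mod2 (zt_pdot (root_code x y e1 e2 e3) (root_code x' y' f1 f2 f3) q)
  = f4_pdot (root_mod2 x y) (root_mod2 x' y') q.
Proof.
have nth_mod2 x1 y1 g1 g2 g3 j : zt_mod2 (nth (0, 0) (root_code x1 y1 g1 g2 g3) j)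
    = nth (false, false) (root_mod2 x1 y1) j.
  by case: j => [|[|[|[|j]]]]; rewrite /= ?zt_mod2_sign ?nth_nil.
by rewrite /zt_pdot /f4_pdot /= !zt_mod2D !zt_mod2M !nth_mod2 !zt_mod2_sign.
Qed.

(* Modulo 2 the two families reduce to [(0, 1, w^2, w)] and [(0, 1, w, w^2)]: the twist
   comes from the Galois conjugation, and it makes the pairing nonzero for every even
   relative permutation [q]. *)
Lemma f4_pdot_roots :
  all (fun q => odd (inversions q) ||
    (f4_pdot (root_mod2 tau'_code tau_code) (root_mod2 tau_code tau'_code) q
     != (false, false)))
  (permutations (iota 0 4)).
Proof. by vm_compute. Qed.

Lemma zt_pdot_roots_odd (s t : 'S_4) (e1 e2 e3 f1 f2 f3 : bool) :
  ~~ odd_perm s -> ~~ odd_perm t ->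
  zt_odd (zt_pdot (root_code tau'_code tau_code e1 e2 e3)
                  (root_code tau_code tau'_code f1 f2 f3) (perm_code (s^-1 * t)%g)).
Proof.
move=> s_even t_even.
have := allP f4_pdot_roots _ (perm_code_permutation (s^-1 * t)%g).
by rewrite -odd_perm_inversions odd_permM odd_permV (negPf s_even) (negPf t_even) /zt_odd zt_mod2_pdot.
Qed.

Section RootsOfH4.
Variable R : rcfType.

Lemma sgn_sqr (e : bool) : sgn R e ^+ 2 = 1.
Proof. by rewrite /sgn -exprM mulnC exprM sqrrN expr1n expr1n. Qed.

Lemma tau'_tau_sqr : tau' R ^+ 2 + tau R ^+ 2 = 3.
Proof. by rewrite tau'E sqrrB tau_sqr; ring. Qed.

Lemma dot_root (s : 'S_4) (e1 e2 e3 : bool) (x y : R) :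
  x ^+ 2 + y ^+ 2 = 3 ->
  let v := permv s (vec4 0 (sgn R e1 / 2) (sgn R e2 * x / 2) (sgn R e3 * y / 2)) in
  dot v v = 1.
Proof.
move=> xy_sqr /=; rewrite dot_permv dot_vec4.
have -> : 0 * 0 + sgn R e1 / 2 * (sgn R e1 / 2) + sgn R e2 * x / 2 * (sgn R e2 * x / 2)
    + sgn R e3 * y / 2 * (sgn R e3 * y / 2)
  = (sgn R e1 ^+ 2 + sgn R e2 ^+ 2 * x ^+ 2 + sgn R e3 ^+ 2 * y ^+ 2) / 4 by field.
by rewrite !sgn_sqr !mul1r -addrA xy_sqr; field.
Qed.

Lemma root_code_eval (x y : zt) (e1 e2 e3 : bool) (j : nat) :
  2 * [:: 0; sgn R e1 / 2; sgn R e2 * zt_eval R x / 2; sgn R e3 * zt_eval R y / 2]`_j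
  = zt_eval R (nth (0, 0) (root_code x y e1 e2 e3) j).
Proof.
case: j => [|[|[|[|j]]]] /=; rewrite ?zt_eval_sign ?zt_eval_int; try by field.
by rewrite !nth_nil zt_eval_int mulr0.
Qed.

Lemma four_dot_roots (s t : 'S_4) (x y x' y' : zt) (e1 e2 e3 f1 f2 f3 : bool) :
  4 * dot (permv s (vec4 0 (sgn R e1 / 2) (sgn R e2 * zt_eval R x / 2) (sgn R e3 * zt_eval R y / 2)))
          (permv t (vec4 0 (sgn R f1 / 2) (sgn R f2 * zt_eval R x' / 2) (sgn R f3 * zt_eval R y' / 2)))
  = zt_eval R (zt_pdot (root_code x y e1 e2 e3) (root_code x' y' f1 f2 f3)
                       (perm_code (s^-1 * t)%g)).
Proof.
rewrite dot_permv2 dotE sum4 !mxE !inordK // /zt_pdot /=.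
rewrite !zt_evalD !zt_evalM -!root_code_eval !zt_eval_sign !zt_eval_int.
by field.
Qed.

End RootsOfH4.

Lemma refl_refl_infinite_order (R : rcfType) (a b : 'rV[R]_4) (X : zt) :
  dot a a = 1 -> dot b b = 1 -> zt_odd X -> 4 * dot a b = zt_eval R X ->
  infinite_order (fun x => refl a (refl b x)).
Proof.
move=> a_unit b_unit X_odd X_eq n n_gt0; exists a => fix_a.
set U := zt_sub (zt_mul X X) (8, 0).
have U_eq : 4 * (4 * dot a b ^+ 2 - 2) = zt_eval R U.
  by rewrite zt_evalB zt_evalM -X_eq zt_eval_int; ring.
have U_odd : zt_odd U by rewrite zt_odd_sub_even //; apply: zt_odd_mul.
have := recurrence_neq1 (d := fun m => dot (iter m (fun x => refl a (refl b x)) a) a)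
  U_eq a_unit (dot_rotation b a_unit) (dot_iter_rotation_rec a_unit b_unit) U_odd n_gt0.
by rewrite /= fix_a a_unit eqxx.
Qed.

Lemma Deltadot_DeltaC (R : rcfType) (v : 'rV[R]_4) :
  Deltadot v -> DeltaC (tau' R) (tau R) v.
Proof.
case=> [[v_A | [v_B | //]] v_notK]; case: v_notK; first by split; left.
by split; right; left.
Qed.

Lemma Deltadot'_DeltaC (R : rcfType) (v : 'rV[R]_4) :
  Deltadot' v -> DeltaC (tau R) (tau' R) v.
Proof.
case=> [[v_A | [v_B | //]] v_notK]; case: v_notK; first by split; left.
by split; right; left.
Qed.

Unset Implicit Arguments.
Theorem mainTheorem3 (R : rcfType) (alpha beta' : 'rV[R]_4) :
  Deltadot alpha -> Deltadot' beta' ->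
  infinite_order (fun x => refl alpha (refl beta' x)).
Proof.
move=> /Deltadot_DeltaC [s [e1 [e2 [e3 [s_even ->]]]]].
move=> /Deltadot'_DeltaC [t [f1 [f2 [f3 [t_even ->]]]]].
apply: (refl_refl_infinite_order _ _ (zt_pdot_roots_odd e1 e2 e3 f1 f2 f3 s_even t_even)).
- by apply: dot_root; rewrite tau'_tau_sqr.
- by apply: dot_root; rewrite addrC tau'_tau_sqr.
by rewrite -zt_eval_tau -zt_eval_tau' four_dot_roots.
Qed.
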